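(* Let $L$ be a real-valued Lévy process with characteristic triplet $(b,0,F)$ whose symbol $A$ satisfies the Gårding condition with index $Y\in(0,2)$, i.e. there exist constants $C_2>0$, $C_3\ge0$ and $0\le Y'<Y$ with $\Re(A(u))\ge C_2|u|^Y-C_3(1+u^2)^{Y'/2}$ for all $u\in\mathds R$. Then $\int_{-1}^1|x|^\alpha F(dx)=\infty$ for all $\alpha<Y$. In particular, the Blumenthal–Getoor index $\beta$ of $L$ satisfies $\beta\ge Y$.
   Context: The symbol of $L$ (w.r.t. a truncation function $h$) is $A(u)=iub-\int(e^{-iuy}-1+iuh(y))F(dy)$, so $\Re(A(u))=\int(1-\cos(uy))F(dy)$. The Blumenthal–Getoor index is $\beta:=\inf\{\alpha>0:\int_{[-1,1]}|x|^\alpha F(dx)<\infty\}$. *)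

From HB Require Import structures.
From mathcomp Require Import all_boot all_order all_algebra.
From mathcomp Require Import all_classical all_reals all_analysis.
Set Implicit Arguments. Unset Strict Implicit. Unset Printing Implicit Defensive.
Import Order.TTheory GRing.Theory Num.Theory.
Local Open Scope classical_set_scope.
Local Open Scope ring_scope.

Definition levy_measure (R : realType) (F : {measure set R -> \bar R}) : Prop :=
  F [set 0] = 0%E /\
  (\int[F]_x (Num.min 1 (x ^+ 2))%:E < +oo)%E.

(* Real part of the Lévy symbol A(u) of a triplet (b,0,F):
   Re A(u) = \int (1 - cos(u y)) F(dy)  (independent of b and of h). *)
Definition symbol_re (R : realType) (F : {measure set R -> \bar R}) (u : R) : \bar R :=
  (\int[F]_y (1 - cos (u * y))%:E)%E.

Definition garding (R : realType) (F : {measure set R -> \bar R}) (Y : R) : Prop :=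
  exists (C2 C3 Y' : R), 0 < C2 /\ 0 <= C3 /\ 0 <= Y' /\ Y' < Y /\
    forall u : R,
      ((C2 * `|u| `^ Y - C3 * (1 + u ^+ 2) `^ (Y' / 2))%:E <= symbol_re F u)%E.

Definition BG_index (R : realType) (F : {measure set R -> \bar R}) : \bar R :=
  ereal_inf [set a%:E | a in [set a : R | 0 < a /\
     (\int[F]_(x in `[(-1)%R, 1%R]%classic) (`|x| `^ a)%:E < +oo)%E]].

From HB Require Import structures.
From mathcomp Require Import all_boot all_order all_algebra.
From mathcomp Require Import all_classical all_reals all_analysis.
From mathcomp Require Import ring lra.
From mathcomp Require Import measurable_realfun.
Import Order.TTheory GRing.Theory Num.Theory.
Local Open Scope classical_set_scope.
Local Open Scope ring_scope.

(* Since 1 - cos t <= min(2, t^2/2) <= 2 |t|^a for a in [0, 2], the symbol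
   is bounded by 2 |u|^a \int_{[-1,1]} |x|^a F(dx) + 2 \int min(1, x^2) F(dx).
   If the small-jump integral were finite for some alpha < Y, it would be
   finite for an exponent a in [max(alpha, Y'), Y), and the Gårding condition
   would force C2 |u|^Y to be dominated by a multiple of |u|^a for large u,
   which is impossible. *)

Section real_bounds.
Variable R : realType.

Lemma normr_sin_le (x : R) : `|sin x| <= `|x|.
Proof.
have sin_le (x' : R) : 0 < x' -> `|sin x'| <= x'.
  move=> x'0.
  have [c _ mvt] : exists2 c, c \in `]0, x'[ & sin x' - sin 0 = cos c * (x' - 0).
    apply: (@MVT R sin cos 0 x' x'0).
    by apply: derivable_within_continuous => y _; exact: derivable_sin.
  rewrite sin0 !subr0 in mvt.
  rewrite mvt normrM (gtr0_norm x'0).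
  by apply: ler_piMl; [exact: ltW | exact: cos_max].
have [x0|x0|->] := ltgtP x 0; last by rewrite sin0 normr0.
- by rewrite -normrN -sinN (ltr0_norm x0) sin_le// oppr_gt0.
- by rewrite (gtr0_norm x0) sin_le.
Qed.

Lemma one_sub_cos_le_sqr (t : R) : 1 - cos t <= t ^+ 2 / 2.
Proof.
have -> : t = (t / 2) *+ 2 by rewrite -mulr_natr divfK.
rewrite cos_mulr2n cos2sin2.
have sin_sqr : sin (t / 2) ^+ 2 <= (t / 2) ^+ 2.
  rewrite -(real_normK (num_real (sin _))) -(real_normK (num_real (t / 2))).
  by rewrite lerXn2r ?nnegrE ?normr_sin_le.
have -> : ((t / 2) *+ 2) ^+ 2 / 2 = 2 * (t / 2) ^+ 2 by rewrite mulr2n; field.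
lra.
Qed.

Lemma one_sub_cos_le_powR (a t : R) : 0 <= a <= 2 -> 1 - cos t <= 2 * `|t| `^ a.
Proof.
move=> /andP[a0 a2].
have [t1|t1] := lerP `|t| 1; last first.
  have : 1 <= `|t| `^ a by rewrite -(powRr0 `|t|); apply: ler_powR => //; exact: ltW.
  have := cos_geN1 t; lra.
have [->|t0] := eqVneq t 0; first by rewrite cos0 subrr mulr_ge0 ?powR_ge0.
have sqr_le : `|t| `^ 2%:R <= `|t| `^ a by rewrite ger_powR ?normr_gt0 ?t0.
rewrite powR_mulrn // real_normK ?num_real // in sqr_le.
have := one_sub_cos_le_sqr t; have := powR_ge0 `|t| a; nra.
Qed.

Lemma powR_not_dominated (C D a Y : R) : 0 < C -> 0 <= D -> a < Y ->
  ~ (forall u, 1 <= u -> C * u `^ Y <= D * u `^ a).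
Proof.
move=> C0 D0 aY dominated.
have b1 : 1 <= D / C + 1 by rewrite lerDr divr_ge0 // ltW.
(* at u = (D/C + 1)^(1/(Y - a)) one has C u^Y = (D + C) u^a *)
pose u := (D / C + 1) `^ (Y - a)^-1.
have u1 : 1 <= u.
  by rewrite -(powRr0 (D / C + 1)); apply: ler_powR; rewrite // invr_ge0 subr_ge0 ltW.
have u0 : 0 < u by exact: lt_le_trans ltr01 u1.
have ua0 : 0 < u `^ a by rewrite powR_gt0.
have uY : u `^ Y = (D / C + 1) * u `^ a.
  rewrite -[in LHS](subrK a Y) powRD; last by rewrite (gt_eqF u0) implybT.
  rewrite -powRrM mulVf ?subr_eq0 ?gt_eqF // powRr1 //.
  exact: le_trans ler01 b1.
have := dominated u u1; rewrite uY mulrA mulrDr mulrCA divff ?gt_eqF // mulr1 mulr1.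
nra.
Qed.

Lemma powR_one_add_sqr_le (u r : R) : 1 <= u -> 0 <= r <= 2 ->
  (1 + u ^+ 2) `^ (r / 2) <= 2 * u `^ r.
Proof.
move=> u1 /andP[r0 r2].
have u0 : 0 <= u by exact: le_trans ler01 u1.
have r20 : 0 <= r / 2 by rewrite divr_ge0.
apply: (@le_trans _ _ ((2 * u ^+ 2) `^ (r / 2))).
  by rewrite ge0_ler_powR ?nnegrE ?addr_ge0 ?mulr_ge0 ?sqr_ge0 //; nra.
rewrite powRM ?sqr_ge0 // -powR_mulrn // -powRrM mulrCA divff ?pnatr_eq0 // mulr1.
rewrite ler_wpM2r ?powR_ge0 //.
by rewrite -[leRHS](powRr1 (ler0n _ 2)) ler_powR ?ler1n // ler_pdivrMr ?mul1r.
Qed.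

Lemma garding_growth_contra (C2 C3 Y' a Y c0 c1 : R) :
  0 < C2 -> 0 <= C3 -> 0 <= Y' -> Y' <= a -> a < Y -> a <= 2 -> 0 <= c0 -> 0 <= c1 ->
  ~ (forall u, C2 * `|u| `^ Y - C3 * (1 + u ^+ 2) `^ (Y' / 2) <= c1 * `|u| `^ a + c0).
Proof.
move=> C20 C30 Y'0 Y'a aY a2 c00 c10 bound.
apply: (@powR_not_dominated C2 (c1 + 2 * C3 + c0) a Y C20 _ aY).
  by rewrite !addr_ge0 ?mulr_ge0.
move=> u u1; have u0 : 0 < u by exact: lt_le_trans ltr01 u1.
have ua1 : 1 <= u `^ a by rewrite -(powRr0 u) ler_powR // (le_trans Y'0).
have weight : (1 + u ^+ 2) `^ (Y' / 2) <= 2 * u `^ a.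
  apply: le_trans (@powR_one_add_sqr_le u Y' u1 _) _; first by rewrite Y'0 (le_trans Y'a).
  by rewrite ler_wpM2l // ler_powR.
have := bound u; rewrite gtr0_norm //.
have := mulr_ge0 C30 (powR_ge0 (1 + u ^+ 2) (Y' / 2)); nra.
Qed.

End real_bounds.

Section levy_integrals.
Variable R : realType.
Implicit Type F : {measure set R -> \bar R}.

Let I := `[(-1)%R, 1%R]%classic : set R.

Let mI : measurable I. Proof. exact: measurable_itv. Qed.

Let in_I x : (x \in I) = (`|x| <= 1). Proof. by rewrite mem_setE in_itv /= ler_norml. Qed.

Lemma measurable_normr_powR (D : set R) (c : R) :
  measurable_fun D (fun x : R => (`|x| `^ c)%:E).
Proof.
apply/measurable_funTS/measurable_EFinP.
by apply: (measurableT_comp (measurable_powR c)); exact: normr_measurable.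
Qed.

Lemma integral_normr_powR_le F (alpha a : R) : alpha <= a -> 0 < a ->
  (\int[F]_(x in I) (`|x| `^ a)%:E <= \int[F]_(x in I) (`|x| `^ alpha)%:E)%E.
Proof.
move=> aa a0; apply: ge0_le_integral => //; try exact: measurable_normr_powR.
move=> x /mem_set; rewrite in_I lee_fin => x1.
have [->|x0] := eqVneq x 0; first by rewrite normr0 powR0 ?gt_eqF ?powR_ge0.
by rewrite ger_powR ?normr_gt0 ?x0.
Qed.

Lemma symbol_re_le F (a u : R) : 0 <= a <= 2 ->
  (symbol_re F u <= (2 * `|u| `^ a)%:E * \int[F]_(x in I) (`|x| `^ a)%:E
                    + 2%:E * \int[F]_x (Num.min 1 (x ^+ 2))%:E)%E.
Proof.
move=> a02; rewrite /symbol_re (integral_mkcond I).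
set h := (fun x => (`|x| `^ a)%:E) \_ I.
set m := fun x : R => (Num.min 1 (x ^+ 2))%:E.
have h0 x : (0 <= h x)%E by rewrite /h /patch; case: ifP; rewrite // lee_fin powR_ge0.
have m0 x : (0 <= m x)%E by rewrite lee_fin le_min ler01 sqr_ge0.
have mh : measurable_fun setT h.
  by apply/(measurable_restrictT _ _).1 => //; exact: measurable_normr_powR.
have mm : measurable_fun setT m.
  apply/measurable_EFinP; apply: measurable_minr; first exact: measurable_cst.
  exact: exprn_measurable.
have mhZ : measurable_fun setT (fun x => (2 * `|u| `^ a)%:E * h x)%E.
  by apply: emeasurable_funM => //; exact: measurable_cst.
have mmZ : measurable_fun setT (fun x => 2%:E * m x)%E.
  by apply: emeasurable_funM => //; exact: measurable_cst.
apply: (@le_trans _ _ (\int[F]_x ((2 * `|u| `^ a)%:E * h x + 2%:E * m x))%E); last first.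
  have hZ0 x : setT x -> (0 <= (2 * `|u| `^ a)%:E * h x)%E by rewrite mule_ge0.
  have mZ0 x : setT x -> (0 <= 2%:E * m x)%E by rewrite mule_ge0.
  by rewrite ge0_integralD // !ge0_integralZl_EFin.
apply: ge0_le_integral => //.
- apply/measurable_EFinP; apply: measurable_funB; first exact: measurable_cst.
  apply: measurableT_comp.
    by apply: continuous_measurable_fun; exact: continuous_cos.
  by apply: measurable_funM; [exact: measurable_cst | exact: measurable_id].
- exact: emeasurable_funD.
move=> y _; rewrite /h /patch /m; case: ifP; rewrite in_I => y1.
  rewrite -!EFinM -EFinD lee_fin.
  have := @one_sub_cos_le_powR R a (u * y) a02; rewrite normrM powRM //.
  have : 0 <= Num.min 1 (y ^+ 2) by rewrite le_min ler01 sqr_ge0.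
  have := powR_ge0 `|y| a; nra.
have y2 : 1 <= y ^+ 2.
  by rewrite -real_normK ?num_real // -[1](expr1n _ 2) lerXn2r ?nnegrE // ltW // ltNge y1.
rewrite mule0 add0e -EFinM lee_fin min_l //.
have := cos_geN1 (u * y); lra.
Qed.

Lemma garding_integral_powR_infinite F (Y alpha : R) :
  levy_measure F -> 0 < Y < 2 -> garding F Y -> alpha < Y ->
  (\int[F]_(x in I) (`|x| `^ alpha)%:E = +oo)%E.
Proof.
move=> [_ Lfin_lt] /andP[Y0 Y2] [C2 [C3 [Y' [C20 [C30 [Y'0 [Y'Y HG]]]]]]] aY.
apply/eqP; apply: contraT => finite_alpha.
(* raise the exponent to a >= Y' so that the Gårding error term is also O(|u|^a) *)
pose a := Num.max alpha ((Y' + Y) / 2).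
have a0 : 0 < a by rewrite lt_max; apply/orP; right; lra.
have alpha_a : alpha <= a by rewrite le_max lexx.
have aY' : Y' <= a by rewrite le_max; apply/orP; right; lra.
have aY2 : a < Y by rewrite gt_max aY /=; lra.
have a02 : 0 <= a <= 2 by rewrite ltW //=; lra.
set K := (\int[F]_(x in I) (`|x| `^ a)%:E)%E.
set L := (\int[F]_x (Num.min 1 (x ^+ 2))%:E)%E.
have K0 : (0 <= K)%E by apply: integral_ge0 => x _; rewrite lee_fin powR_ge0.
have L0 : (0 <= L)%E.
  by apply: integral_ge0 => x _; rewrite lee_fin le_min ler01 sqr_ge0.
have Kfin : K \is a fin_num.
  rewrite ge0_fin_numE //.
  by apply: le_lt_trans (integral_normr_powR_le F alpha a alpha_a a0) _; rewrite ltey.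
have Lfin : L \is a fin_num by rewrite ge0_fin_numE.
exfalso; apply: (@garding_growth_contra R C2 C3 Y' a Y (2 * fine L) (2 * fine K)) => //.
- by case/andP: a02.
- by rewrite mulr_ge0 ?fine_ge0.
- by rewrite mulr_ge0 ?fine_ge0.
move=> u; rewrite -lee_fin; apply: le_trans (HG u) (le_trans (symbol_re_le F a u a02) _).
by rewrite -/K -/L -{1}(fineK Kfin) -{1}(fineK Lfin) -!EFinM -EFinD mulrAC.
Qed.

Lemma BG_index_ge F (Y : R) :
  (forall alpha : R, (alpha < Y)%R -> \int[F]_(x in I) (`|x| `^ alpha)%:E = +oo)%E ->
  (Y%:E <= BG_index F)%E.
Proof.
move=> infinite; apply: le_ereal_inf_tmp => _ [r [_ r_fin] <-].
rewrite lee_fin leNgt; apply/negP => rY.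
by move: r_fin; rewrite infinite.
Qed.

End levy_integrals.

Theorem mainTheorem10 (R : realType) (b : R) (F : {measure set R -> \bar R})
  (Y : R) :
  levy_measure F -> 0 < Y < 2 -> garding F Y ->
  (forall alpha : R, alpha < Y ->
     (\int[F]_(x in `[(-1)%R, 1%R]%classic) (`|x| `^ alpha)%:E = +oo)%E) /\
  (Y%:E <= BG_index F)%E.
Proof.
move=> LF Y02 GF.
have infinite alpha : alpha < Y ->
    (\int[F]_(x in `[(-1)%R, 1%R]%classic) (`|x| `^ alpha)%:E = +oo)%E.
  exact: garding_integral_powR_infinite.
by split; last exact: BG_index_ge.
Qed.
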